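(* For every integer $k\ge 3$ there exists a $K_3$-WORM-colorable graph $F_k$ such that $W^-(F_k,K_3)=k$.
   Context: A $K_3$-WORM coloring of a graph $G$ is an assignment of colors to the vertices of $G$ such that the three vertices of every triangle ($K_3$-subgraph) of $G$ receive exactly two distinct colors (no triangle is monochromatic or rainbow). $G$ is $K_3$-WORM-colorable if it has such a coloring, and then $W^-(G,K_3)$ is the minimum number of colors used in a $K_3$-WORM coloring of $G$. *)

From mathcomp Require Import all_boot.
Set Implicit Arguments. Unset Strict Implicit. Unset Printing Implicit Defensive.

Definition simple_graph (V : finType) (e : rel V) : Prop :=
  symmetric e /\ irreflexive e.

Definition triangle (V : finType) (e : rel V) (x y z : V) : bool :=
  [&& e x y, e y z & e x z].

Definition K3_worm_coloring (V : finType) (e : rel V) (c : V -> nat) : Prop :=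
  forall x y z : V, triangle e x y z -> size (undup [:: c x; c y; c z]) = 2.

Definition K3_worm_colorable (V : finType) (e : rel V) : Prop :=
  exists c : V -> nat, K3_worm_coloring e c.

Definition num_colors (V : finType) (c : V -> nat) : nat := size (undup [seq c x | x <- enum V]).

Definition lower_worm_number_is (V : finType) (e : rel V) (k : nat) : Prop :=
  (exists c : V -> nat, K3_worm_coloring e c /\ num_colors c = k) /\
  (forall c : V -> nat, K3_worm_coloring e c -> k <= num_colors c).

From mathcomp Require Import all_boot.
Set Implicit Arguments. Unset Strict Implicit. Unset Printing Implicit Defensive.

(* F_k has one vertex per color 0 .. k-1 and, for every ordered pair i <> j, a
   copy of a ten-vertex gadget whose two terminals are the vertices i and j.
   In a K_3-WORM coloring two vertices completing the same triangle to a K_4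
   get the same color; in the gadget this forces the inner vertices 2 and 6 to
   share the color of terminal 0, and the triangle 1 2 6 then separates the
   terminals.  So every K_3-WORM coloring of F_k is injective on the k color
   vertices.  Conversely, no edge of the gadget joins its terminals, hence
   every triangle of F_k lies in one copy, and coloring each copy by a fixed
   two-class WORM coloring of the gadget, with the colors of its terminals,
   uses exactly k colors. *)


Definition two_colored (T : eqType) (a b c : T) : Prop := size (undup [:: a; b; c]) = 2.

Lemma two_colored_map (T T' : eqType) (f : T -> T') (a b c : T) :
  injective f -> two_colored a b c -> two_colored (f a) (f b) (f c).
Proof.
move=> f_inj; rewrite /two_colored -[[:: f a; _; _]]/(map f [:: a; b; c]).
by rewrite undup_map_inj // size_map.
Qed.

Lemma two_colored_K4_apex (T : eqType) (p a b c : T) :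
  two_colored a b c -> two_colored p a b -> two_colored p a c -> two_colored p b c ->
  p = if a == b then c else if a == c then b else a.
Proof.
rewrite /two_colored /= !inE.
by repeat (case: eqP => [?|?]; subst => //=); rewrite ?inE ?eqxx.
Qed.

Lemma num_colors_ge (V T : finType) (c : V -> nat) (f : T -> V) :
  injective (c \o f) -> #|T| <= num_colors c.
Proof.
move=> cf_inj; rewrite cardE -(size_map (c \o f)) /num_colors.
apply: uniq_leq_size; first by rewrite map_inj_uniq ?enum_uniq.
by move=> _ /mapP [t _ ->]; rewrite mem_undup (map_f c) ?mem_enum.
Qed.

Lemma num_colors_le (V : finType) (c : V -> nat) (n : nat) :
  (forall x, c x < n) -> num_colors c <= n.
Proof.
move=> c_lt; rewrite /num_colors -(size_iota 0 n).
apply: uniq_leq_size; first exact: undup_uniq.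
by move=> y; rewrite mem_undup => /mapP [x _ ->]; rewrite mem_iota c_lt.
Qed.

Lemma all_iota_ord (n : nat) (P : pred nat) : all P (iota 0 n) -> forall u : 'I_n, P u.
Proof. by move=> /allP allP u; apply: allP; rewrite mem_iota ltn_ord. Qed.

(* Vertices 0 and 1 are the terminals.  Vertices 0 and 2 both complete the
   triangle 345 to a K_4, vertices 0 and 6 both complete 789 to a K_4, and 126
   is a triangle. *)
Definition gadget_edges : seq (nat * nat) :=
  [:: (0, 3); (0, 4); (0, 5); (2, 3); (2, 4); (2, 5); (3, 4); (3, 5); (4, 5);
      (0, 7); (0, 8); (0, 9); (6, 7); (6, 8); (6, 9); (7, 8); (7, 9); (8, 9);
      (1, 2); (1, 6); (2, 6)].

Definition gadget_adj : rel nat := fun u v =>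
  ((u, v) \in gadget_edges) || ((v, u) \in gadget_edges).

Definition gadget : rel 'I_10 := fun u v => gadget_adj u v.

Notation "''v_' n" := (@Ordinal 10 n isT) (at level 8, n at level 2, format "''v_' n").

(* The two color classes of a K_3-WORM coloring of the gadget. *)
Definition gadget_target_class (u : nat) : bool := u \in [:: 1; 3; 4; 7; 8].

Lemma gadget_sym : symmetric gadget.
Proof. by move=> u v; rewrite /gadget /gadget_adj orbC. Qed.

Lemma gadget_irrefl : irreflexive gadget.
Proof.
have loopless : all (fun u => ~~ gadget_adj u u) (iota 0 10) by [].
by move=> u; apply/negbTE/(all_iota_ord loopless).
Qed.

Lemma gadget_internal_end u v : gadget u v -> (1 < u) || (1 < v).
Proof.
have : all (fun u => all (fun v => gadget_adj u v ==> (1 < u) || (1 < v)) (iota 0 10))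
  (iota 0 10) by [].
by move/all_iota_ord/(_ u)/all_iota_ord/(_ v)/implyP.
Qed.

Lemma gadget_target_class_worm u v w :
  triangle gadget u v w ->
  two_colored (gadget_target_class u) (gadget_target_class v) (gadget_target_class w).
Proof.
have : all (fun u => all (fun v => all (fun w =>
    [&& gadget_adj u v, gadget_adj v w & gadget_adj u w] ==>
    (size (undup [:: gadget_target_class u; gadget_target_class v;
                     gadget_target_class w]) == 2))
  (iota 0 10)) (iota 0 10)) (iota 0 10) by vm_compute.
by move/all_iota_ord/(_ u)/all_iota_ord/(_ v)/all_iota_ord/(_ w)/implyP => H /H/eqP.
Qed.

Lemma gadget_worm_separates (c : 'I_10 -> nat) :
  K3_worm_coloring gadget c -> c 'v_0 != c 'v_1.
Proof.
move=> c_worm.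
have apex_eq (p q a b d : 'I_10) :
    triangle gadget a b d -> triangle gadget p a b -> triangle gadget p a d ->
    triangle gadget p b d -> triangle gadget q a b -> triangle gadget q a d ->
    triangle gadget q b d -> c p = c q.
  move=> /c_worm abd /c_worm pab /c_worm pad /c_worm pbd /c_worm qab /c_worm qad /c_worm qbd.
  by rewrite (two_colored_K4_apex abd pab pad pbd) (two_colored_K4_apex abd qab qad qbd).
have c2 : c 'v_2 = c 'v_0 by apply: (apex_eq _ _ 'v_3 'v_4 'v_5).
have c6 : c 'v_6 = c 'v_0 by apply: (apex_eq _ _ 'v_7 'v_8 'v_9).
have := c_worm 'v_2 'v_6 'v_1 isT; rewrite c2 c6 /= !inE eqxx /=.
by case: eqP.
Qed.

Section WormGraph.

Variable k : nat.

Definition Fk_vertex : finType := ('I_k + 'I_k * 'I_k * 'I_8)%type.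

Definition gadget_embed (ij : 'I_k * 'I_k) (u : 'I_10) : Fk_vertex :=
  match val u with 0 => inl ij.1 | 1 => inl ij.2 | n.+2 => inr (ij, inord n) end.

Definition Fk_adj : rel Fk_vertex := fun x y =>
  [exists ij : 'I_k * 'I_k, exists u, exists v,
    [&& ij.1 != ij.2, gadget u v, x == gadget_embed ij u & y == gadget_embed ij v]].

Lemma Fk_adjP x y :
  reflect (exists ij u v, [/\ ij.1 != ij.2, gadget u v, x = gadget_embed ij u &
                              y = gadget_embed ij v])
          (Fk_adj x y).
Proof.
apply: (iffP existsP) => [[ij /existsP [u /existsP [v /and4P [ij_ne uv /eqP -> /eqP ->]]]]|].
  by exists ij, u, v.
case=> ij [u [v [ij_ne uv -> ->]]]; exists ij; apply/existsP; exists u; apply/existsP; exists v.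
by rewrite ij_ne uv !eqxx.
Qed.

Lemma gadget_embed_inj ij : ij.1 != ij.2 -> injective (gadget_embed ij).
Proof.
move=> ij_ne u v; rewrite /gadget_embed => uv; apply: val_inj; move: uv.
case: u v => [[|[|m]] m_lt] [[|[|n]] n_lt] //=.
- by case=> /eqP; rewrite (negPf ij_ne).
- by case=> /eqP; rewrite eq_sym (negPf ij_ne).
by case=> /(congr1 val); rewrite /= !inordK // => ->.
Qed.

Lemma gadget_embed_copy ij ij' u u' :
  gadget_embed ij u = gadget_embed ij' u' -> 1 < u -> ij = ij'.
Proof.
rewrite /gadget_embed; case: u => [[|[|m]] m_lt] //= + _.
by case: u' => [[|[|n]] n_lt] //= [].
Qed.

Lemma gadget_edge_copy ij ij' u v u' v' : gadget u v ->
  gadget_embed ij u = gadget_embed ij' u' -> gadget_embed ij v = gadget_embed ij' v' ->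
  ij = ij'.
Proof.
move=> /gadget_internal_end /orP [u_int uu' _ | v_int _ vv'].
  exact: gadget_embed_copy uu' u_int.
exact: gadget_embed_copy vv' v_int.
Qed.

Lemma gadget_embed_shared ij ij' u u' :
  ij != ij' -> gadget_embed ij u = gadget_embed ij' u' -> u <= 1.
Proof.
by move=> ij_ne uu'; rewrite leqNgt; exact: contra_neqN (gadget_embed_copy uu') ij_ne.
Qed.

Lemma Fk_triangle_in_copy x y z : triangle Fk_adj x y z ->
  exists ij u v w, [/\ ij.1 != ij.2, triangle gadget u v w, x = gadget_embed ij u,
                       y = gadget_embed ij v & z = gadget_embed ij w].
Proof.
case/and3P=> /Fk_adjP [ij [u [v [ij_ne uv -> ->]]]] /Fk_adjP [ij2 [v2 [w2 [_ vw2 yv2 ->]]]].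
case/Fk_adjP=> [ij3 [u3 [w3 [_ uw3 xu3 zw3]]]].
have ij3E : ij3 = ij.
  case: (eqVneq ij3 ij) => // ij3_ne.
  have v_int : 1 < v.
    have /orP [|//] := gadget_internal_end uv.
    by rewrite ltnNge (gadget_embed_shared _ xu3) // eq_sym.
  have w3_int : 1 < w3.
    have /orP [|//] := gadget_internal_end uw3.
    by rewrite ltnNge (gadget_embed_shared ij3_ne (esym xu3)).
  by rewrite (gadget_embed_copy (esym zw3) w3_int) (gadget_embed_copy yv2 v_int) eqxx in ij3_ne.
subst ij3; have ij2E := gadget_edge_copy vw2 (esym yv2) zw3; subst ij2.
move: xu3 yv2 zw3 => /(gadget_embed_inj ij_ne) u3E /(gadget_embed_inj ij_ne) v2E.
move=> /(gadget_embed_inj ij_ne) w2E; subst u3 v2 w2.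
by exists ij, u, v, w3; split; rewrite /triangle ?uv ?vw2 ?uw3.
Qed.

Lemma Fk_adj_embed ij u v :
  ij.1 != ij.2 -> gadget u v -> Fk_adj (gadget_embed ij u) (gadget_embed ij v).
Proof. by move=> ij_ne uv; apply/Fk_adjP; exists ij, u, v. Qed.

Lemma Fk_simple : simple_graph Fk_adj.
Proof.
split=> [x y | x].
  by apply/Fk_adjP/Fk_adjP=> -[ij [u [v [ij_ne uv -> ->]]]]; exists ij, v, u;
    rewrite gadget_sym.
apply/Fk_adjP=> -[ij [u [v [ij_ne uv xu /(etrans (esym xu))/(gadget_embed_inj ij_ne) uvE]]]].
by move: uv; rewrite uvE gadget_irrefl.
Qed.

Definition Fk_color (x : Fk_vertex) : nat :=
  match x with
  | inl a => a
  | inr (ij, t) => if gadget_target_class t.+2 then ij.2 else ij.1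
  end.

Lemma Fk_color_embed ij u :
  Fk_color (gadget_embed ij u) = if gadget_target_class u then ij.2 else ij.1.
Proof. by rewrite /gadget_embed; case: u => [[|[|m]] m_lt] //=; rewrite inordK. Qed.

Lemma Fk_color_worm : K3_worm_coloring Fk_adj Fk_color.
Proof.
move=> x y z /Fk_triangle_in_copy [ij [u [v [w [ij_ne uvw -> -> ->]]]]].
rewrite !Fk_color_embed.
apply: (two_colored_map (f := fun b => val (if b then ij.2 else ij.1))).
  by case; case=> // /val_inj/eqP; rewrite ?(negPf ij_ne) // eq_sym (negPf ij_ne).
exact: gadget_target_class_worm.
Qed.

Lemma Fk_color_lt x : Fk_color x < k.
Proof. by case: x => [a|[ij t]] /=; [|case: ifP]. Qed.

Lemma Fk_worm_restrict (c : Fk_vertex -> nat) ij :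
  K3_worm_coloring Fk_adj c -> ij.1 != ij.2 ->
  K3_worm_coloring gadget (c \o gadget_embed ij).
Proof.
move=> c_worm ij_ne u v w /and3P [uv vw uw].
by apply: c_worm; rewrite /triangle !Fk_adj_embed.
Qed.

Lemma Fk_worm_terminals_inj (c : Fk_vertex -> nat) :
  K3_worm_coloring Fk_adj c -> injective (c \o inl).
Proof.
move=> c_worm i j /= cij; case: (eqVneq i j) => // ij_ne.
have := gadget_worm_separates (Fk_worm_restrict (ij := (i, j)) c_worm ij_ne).
by rewrite /= cij eqxx.
Qed.

Lemma Fk_num_colors_ge (c : Fk_vertex -> nat) :
  K3_worm_coloring Fk_adj c -> k <= num_colors c.
Proof. by rewrite -{1}(card_ord k) => /Fk_worm_terminals_inj/num_colors_ge. Qed.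

End WormGraph.

Theorem mainTheorem3 :
  forall k : nat, 3 <= k ->
  exists (V : finType) (e : rel V),
    simple_graph e /\ K3_worm_colorable e /\ lower_worm_number_is e k.
Proof.
move=> k _; exists (Fk_vertex k), (@Fk_adj k).
split; first exact: Fk_simple.
split; first by exists (@Fk_color k); apply: Fk_color_worm.
split; last exact: Fk_num_colors_ge.
exists (@Fk_color k); split; first exact: Fk_color_worm.
apply/eqP; rewrite eqn_leq Fk_num_colors_ge ?andbT; last exact: Fk_color_worm.
exact: num_colors_le (@Fk_color_lt k).
Qed.
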